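(* Let $f\colon[a,b]\to\mathbb{R}$ be Laplace integrable on $[a,b]$ and let $F(x)=\int_a^xf$ for $x\in[a,b]$. Then $F$ is continuous on $[a,b]$.
   Context: Laplace derivates: for $F$ Perron integrable near $x$ and $\delta>0$, $\underline{LD}_1^+F(x)=\liminf_{s\to\infty}s^2\int_0^\delta e^{-st}[F(x+t)-F(x)]dt$, $\overline{LD}_1^+F(x)$ the $\limsup$, $\underline{LD}_1^-F(x)=\liminf_{s\to\infty}(-s^2)\int_0^\delta e^{-st}[F(x-t)-F(x)]dt$, $\overline{LD}_1^-F(x)$ the $\limsup$ (independent of $\delta$); $\underline{LD}_1F=\min(\underline{LD}_1^+F,\underline{LD}_1^-F)$, $\overline{LD}_1F=\max(\overline{LD}_1^+F,\overline{LD}_1^-F)$ (one-sided at endpoints). A major function of $f$ is a continuous $U$ on $[a,b]$ with $\underline{LD}_1U\geqslant f$ and $\underline{LD}_1U>-\infty$ everywhere on $[a,b]$; a minor function is a continuous $V$ with $\overline{LD}_1V\leqslant f$ and $\overline{LD}_1V<\infty$ everywhere. $f$ is Laplace integrable on $[a,b]$ if $\sup\{V(b)-V(a)\}$ over minor functions equals $\inf\{U(b)-U(a)\}$ over major functions and is finite; the common value is $\int_a^bf$ (and $\int_a^x f$ is the integral of $f|_{[a,x]}$, with $\int_a^a f=0$). *)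

From Stdlib Require Import Reals.
From Coquelicot Require Import Coquelicot.
Open Scope R_scope.

Definition liminf_pinfty (g : R -> R) : Rbar :=
  Rbar_lub (fun y => exists M : R,
    y = Rbar_glb (fun z => exists s : R, M < s /\ z = Finite (g s))).
Definition limsup_pinfty (g : R -> R) : Rbar :=
  Rbar_glb (fun y => exists M : R,
    y = Rbar_lub (fun z => exists s : R, M < s /\ z = Finite (g s))).

(* s^2 \int_0^delta e^{-st} [F(x+t) - F(x)] dt  (F continuous: Riemann = Perron) *)
Definition lap_plus (F : R -> R) (x delta s : R) : R :=
  s ^ 2 * RInt (fun t => exp (- (s * t)) * (F (x + t) - F x)) 0 delta.
Definition lap_minus (F : R -> R) (x delta s : R) : R :=
  - s ^ 2 * RInt (fun t => exp (- (s * t)) * (F (x - t) - F x)) 0 delta.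

Definition LDlow_plus  F (b x : R) := liminf_pinfty (lap_plus F x (b - x)).
Definition LDup_plus   F (b x : R) := limsup_pinfty (lap_plus F x (b - x)).
Definition LDlow_minus F (a x : R) := liminf_pinfty (lap_minus F x (x - a)).
Definition LDup_minus  F (a x : R) := limsup_pinfty (lap_minus F x (x - a)).

(* two-sided derivates relative to [a,b], one-sided at the endpoints;
   max written as -min(-.,-.) *)
Definition LDlow (F : R -> R) (a b x : R) : Rbar :=
  if Req_EM_T x a then LDlow_plus F b x
  else if Req_EM_T x b then LDlow_minus F a x
  else Rbar_min (LDlow_plus F b x) (LDlow_minus F a x).
Definition LDup (F : R -> R) (a b x : R) : Rbar :=
  if Req_EM_T x a then LDup_plus F b x
  else if Req_EM_T x b then LDup_minus F a x
  else Rbar_opp (Rbar_min (Rbar_opp (LDup_plus F b x)) (Rbar_opp (LDup_minus F a x))).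

Definition continuous_on_cc (F : R -> R) (a b : R) : Prop :=
  forall x, a <= x <= b ->
    filterlim F (within (fun y => a <= y <= b) (locally x)) (locally (F x)).

Definition major_fun (f U : R -> R) (a b : R) : Prop :=
  continuous_on_cc U a b /\
  forall x, a <= x <= b ->
    Rbar_le (Finite (f x)) (LDlow U a b x) /\ LDlow U a b x <> m_infty.

Definition minor_fun (f V : R -> R) (a b : R) : Prop :=
  continuous_on_cc V a b /\
  forall x, a <= x <= b ->
    Rbar_le (LDup V a b x) (Finite (f x)) /\ LDup V a b x <> p_infty.

Definition minor_sup (f : R -> R) (a b : R) : Rbar :=
  Rbar_lub (fun y => exists V, minor_fun f V a b /\ y = Finite (V b - V a)).
Definition major_inf (f : R -> R) (a b : R) : Rbar :=
  Rbar_glb (fun y => exists U, major_fun f U a b /\ y = Finite (U b - U a)).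

Definition Laplace_integrable (f : R -> R) (a b : R) : Prop :=
  a < b /\ exists I : R, minor_sup f a b = Finite I /\ major_inf f a b = Finite I.

(* \int_a^b f : the common value when f is Laplace integrable on [a,b];
   \int_a^a f = 0 *)
Definition Laplace_int (f : R -> R) (a b : R) : R :=
  if Rle_dec b a then 0 else real (minor_sup f a b).

From Stdlib Require Import Reals Lra Classical.
From Coquelicot Require Import Coquelicot.
Open Scope R_scope.

(* The Laplace derivates of a continuous function at y only see it near y:
   functions whose increments agree on [y, y + η] have Laplace transforms
   s^2 ∫ e^{-st} (...) differing by O(1/s), because (sη)^3 e^{-sη} <= 27.
   Hence a minor function V of f on [a,b] restricts to a minor function on
   [a,x], and any minor function V1 on [a,x], continued by V - V x + V1 x on
   [x,b], is a minor function on [a,b].  Comparing with sup (V b - V a) = I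
   gives V x - V a <= F x <= V x - V a + (I - (V b - V a)), so F is uniformly
   close to the continuous V - V a once V is chosen with V b - V a close to I. *)

Lemma Rbar_lub_is_lub (E : Rbar -> Prop) : Rbar_is_lub E (Rbar_lub E).
Proof. unfold Rbar_lub. destruct (Rbar_ex_lub E). assumption. Qed.

Lemma Rbar_glb_is_glb (E : Rbar -> Prop) : Rbar_is_glb E (Rbar_glb E).
Proof. unfold Rbar_glb. destruct (Rbar_ex_glb E). assumption. Qed.

Lemma limsup_pinfty_le (g : R -> R) (r : R) :
  Rbar_le (limsup_pinfty g) (Finite r) <->
  forall eps, 0 < eps -> Rbar_locally p_infty (fun s => g s <= r + eps).
Proof.
  set (tail_sup := fun M => Rbar_lub (fun z => exists s : R, M < s /\ z = Finite (g s))).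
  change (limsup_pinfty g) with (Rbar_glb (fun y => exists M, y = tail_sup M)).
  split.
  - intros Hle eps Heps. apply NNPP. intros Hnot.
    assert (Hlow : Rbar_le (Finite (r + eps)) (Rbar_glb (fun y => exists M, y = tail_sup M))).
    { apply Rbar_glb_is_glb. intros y [M ->].
      assert (Hs : exists s, ~ (M < s -> g s <= r + eps)).
      { apply not_all_ex_not. intros Hall. apply Hnot. exists M. exact Hall. }
      destruct Hs as [s Hs]. apply imply_to_and in Hs as [HMs Hgs].
      apply Rbar_le_trans with (Finite (g s)).
      + simpl. lra.
      + apply Rbar_lub_is_lub. exists s. split; trivial. }
    pose proof (Rbar_le_trans _ _ _ Hlow Hle) as Hcontra. simpl in Hcontra. lra.
  - intros Hev.
    assert (Hupper : forall eps, 0 < eps ->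
      Rbar_le (Rbar_glb (fun y => exists M, y = tail_sup M)) (Finite (r + eps))).
    { intros eps Heps. destruct (Hev eps Heps) as [M HM].
      apply Rbar_le_trans with (tail_sup M).
      + apply Rbar_glb_is_glb. exists M. reflexivity.
      + apply Rbar_lub_is_lub. intros z [s [Hs ->]]. apply HM, Hs. }
    destruct (Rbar_glb _) as [l | |].
    + apply Rle_plus_epsilon. exact Hupper.
    + exact (Hupper 1 Rlt_0_1).
    + exact I.
Qed.

Lemma limsup_pinfty_le_of_vanishing (g1 g2 : R -> R) (r : R) :
  is_lim (fun s => g1 s - g2 s) p_infty 0 ->
  Rbar_le (limsup_pinfty g2) (Finite r) -> Rbar_le (limsup_pinfty g1) (Finite r).
Proof.
  rewrite !limsup_pinfty_le. intros Hlim Hg2 eps Heps.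
  apply is_lim_spec in Hlim.
  specialize (Hlim (mkposreal (eps / 2) ltac:(lra))).
  generalize (filter_and _ _ Hlim (Hg2 (eps / 2) ltac:(lra))).
  apply filter_imp. simpl. intros s [Hdiff Hg2s].
  rewrite Rminus_0_r in Hdiff. apply Rabs_lt_between in Hdiff. lra.
Qed.

Definition laplace (k : R -> R) (δ s : R) : R :=
  s ^ 2 * RInt (fun t => exp (- (s * t)) * k t) 0 δ.

Lemma continuous_exp_mul (k : R -> R) (s z : R) :
  continuous k z -> continuous (fun t => exp (- (s * t)) * k t) z.
Proof.
  intros Hk. apply (continuous_mult (fun t => exp (- (s * t))) k); [|exact Hk].
  apply continuous_exp_comp, (continuous_opp (fun t => s * t)).
  apply (continuous_mult (fun _ => s) (fun t => t)).
  - apply continuous_const.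
  - apply continuous_id.
Qed.

Lemma ex_RInt_continuous_R (g : R -> R) (a b : R) :
  (forall t, continuous g t) -> ex_RInt g a b.
Proof.
  intros Hg. apply (@ex_RInt_continuous R_CompleteNormedModule). intros t _. apply Hg.
Qed.

Lemma RInt_exp_tail_le (k : R -> R) (s η δ : R) :
  (forall t, continuous k t) -> 0 < s -> η <= δ ->
  Rabs (RInt (fun t => exp (- (s * t)) * k t) η δ) <=
  exp (- (s * η)) * RInt (fun t => Rabs (k t)) η δ.
Proof.
  intros Hk Hs Hηδ.
  assert (Habs : ex_RInt (fun t => Rabs (k t)) η δ).
  { apply ex_RInt_continuous_R. intros t. apply continuous_Rabs_comp, Hk. }
  eapply Rle_trans.
  { apply abs_RInt_le; [exact Hηδ|]. apply ex_RInt_continuous_R.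
    intros t. apply continuous_exp_mul, Hk. }
  change (exp (- (s * η)) * RInt (fun t => Rabs (k t)) η δ)
    with (scal (exp (- (s * η))) (RInt (fun t => Rabs (k t)) η δ)).
  rewrite <- (RInt_scal _ _ _ _ Habs).
  apply RInt_le; [exact Hηδ | | exact (ex_RInt_scal _ _ _ _ Habs) |].
  - apply ex_RInt_continuous_R. intros t.
    apply continuous_Rabs_comp, continuous_exp_mul, Hk.
  - intros t Ht. rewrite Rabs_mult, Rabs_pos_eq by (left; apply exp_pos).
    apply Rmult_le_compat_r; [apply Rabs_pos|].
    left. apply exp_increasing. nra.
Qed.

Lemma pow3_mul_exp_neg_le (u : R) : 0 <= u -> u ^ 3 * exp (- u) <= 27.
Proof.
  intros Hu.
  assert (Hcube : (u / 3) ^ 3 <= exp u).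
  { replace (exp u) with (exp (u / 3) ^ 3)
      by (simpl; rewrite Rmult_1_r, <- !exp_plus; f_equal; field).
    apply pow_incr. pose proof (exp_ineq1_le (u / 3)). lra. }
  assert (Hinv : exp (- u) * exp u = 1).
  { rewrite <- exp_plus, Rplus_opp_l. apply exp_0. }
  pose proof (exp_pos (- u)). nra.
Qed.

Lemma laplace_tail_le (k : R -> R) (η δ s : R) :
  (forall t, continuous k t) -> 0 < η <= δ -> 0 < s ->
  Rabs (laplace k δ s - laplace k η s) <=
  27 * RInt (fun t => Rabs (k t)) η δ / (η ^ 3 * s).
Proof.
  intros Hk Hηδ Hs. unfold laplace.
  assert (Hint : forall c d, ex_RInt (fun t => exp (- (s * t)) * k t) c d).
  { intros c d. apply ex_RInt_continuous_R. intros t. apply continuous_exp_mul, Hk. }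
  rewrite <- (RInt_Chasles _ 0 η δ (Hint 0 η) (Hint η δ)).
  set (head := RInt _ 0 η). set (tail := RInt _ η δ).
  replace (s ^ 2 * plus head tail - s ^ 2 * head) with (s ^ 2 * tail)
    by (unfold plus; simpl; ring).
  rewrite Rabs_mult, Rabs_pos_eq by (apply pow_le; lra).
  pose proof (RInt_exp_tail_le k s η δ Hk Hs ltac:(lra)) as Htail.
  set (A := RInt (fun t => Rabs (k t)) η δ) in *.
  assert (HA : 0 <= A).
  { apply RInt_ge_0; [lra | | intros; apply Rabs_pos].
    apply ex_RInt_continuous_R. intros t. apply continuous_Rabs_comp, Hk. }
  pose proof (pow3_mul_exp_neg_le (s * η) ltac:(nra)) as Hdecay.
  apply Rle_trans with (s ^ 2 * (exp (- (s * η)) * A)).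
  { apply Rmult_le_compat_l; [apply pow_le; lra | exact Htail]. }
  replace (s ^ 2 * (exp (- (s * η)) * A))
    with ((s * η) ^ 3 * exp (- (s * η)) * A / (η ^ 3 * s)) by (field; lra).
  unfold Rdiv. apply Rmult_le_compat_r.
  - left. apply Rinv_0_lt_compat. apply Rmult_lt_0_compat; [apply pow_lt|]; lra.
  - apply Rmult_le_compat_r; assumption.
Qed.

Lemma laplace_local (k1 k2 : R -> R) (δ1 δ2 η : R) :
  (forall t, continuous k1 t) -> (forall t, continuous k2 t) ->
  0 < η -> η <= δ1 -> η <= δ2 ->
  (forall t, 0 <= t <= η -> k1 t = k2 t) ->
  is_lim (fun s => laplace k1 δ1 s - laplace k2 δ2 s) p_infty 0.
Proof.
  intros Hk1 Hk2 Hη Hδ1 Hδ2 Hk.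
  set (K := 27 * (RInt (fun t => Rabs (k1 t)) η δ1 + RInt (fun t => Rabs (k2 t)) η δ2)
              / η ^ 3).
  assert (Hhead : forall s, laplace k1 η s = laplace k2 η s).
  { intros s. unfold laplace. f_equal. apply RInt_ext. intros t Ht.
    rewrite Rmin_left, Rmax_right in Ht by lra. rewrite Hk by lra. reflexivity. }
  assert (Hbound : forall s, 0 < s -> Rabs (laplace k1 δ1 s - laplace k2 δ2 s) <= K / s).
  { intros s Hs.
    pose proof (laplace_tail_le k1 η δ1 s Hk1 (conj Hη Hδ1) Hs) as H1.
    pose proof (laplace_tail_le k2 η δ2 s Hk2 (conj Hη Hδ2) Hs) as H2.
    rewrite Hhead in H1.
    replace (laplace k1 δ1 s - laplace k2 δ2 s)
      with ((laplace k1 δ1 s - laplace k2 η s) - (laplace k2 δ2 s - laplace k2 η s)) by ring.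
    eapply Rle_trans; [apply Rabs_triang|]. rewrite Rabs_Ropp.
    replace (K / s) with (27 * RInt (fun t => Rabs (k1 t)) η δ1 / (η ^ 3 * s)
                         + 27 * RInt (fun t => Rabs (k2 t)) η δ2 / (η ^ 3 * s)).
    - apply Rplus_le_compat; assumption.
    - unfold K. field. split; lra. }
  assert (Hdecay : is_lim (fun s => K / s) p_infty 0).
  { replace (Finite 0) with (Rbar_mult K (Rbar_inv p_infty)) by (simpl; f_equal; ring).
    apply is_lim_scal_l, is_lim_inv; [apply is_lim_id | discriminate]. }
  apply (is_lim_le_le_loc (fun s => - (K / s)) (fun s => K / s)).
  - exists 0. intros s Hs. apply Rabs_le_between, Hbound, Hs.
  - replace (Finite 0) with (Rbar_opp 0) by (simpl; f_equal; ring).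
    apply is_lim_opp, Hdecay.
  - exact Hdecay.
Qed.

(* Composing with the retraction [clamp c d] of R onto [c, d] extends a function
   continuous on [c, d] to one continuous on R, to which [ex_RInt_continuous]
   applies. *)
Definition clamp (c d z : R) : R := Rmax c (Rmin d z).

Lemma clamp_id (c d z : R) : c <= z <= d -> clamp c d z = z.
Proof. unfold clamp, Rmax, Rmin. intros. repeat destruct Rle_dec; lra. Qed.

Lemma clamp_in (c d z : R) : c <= d -> c <= clamp c d z <= d.
Proof. unfold clamp, Rmax, Rmin. intros. repeat destruct Rle_dec; lra. Qed.

Lemma clamp_left (c d z : R) : z <= c <= d -> clamp c d z = c.
Proof. unfold clamp, Rmax, Rmin. intros. repeat destruct Rle_dec; lra. Qed.

Lemma clamp_right (c d z : R) : c <= d <= z -> clamp c d z = d.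
Proof. unfold clamp, Rmax, Rmin. intros. repeat destruct Rle_dec; lra. Qed.

Lemma Rabs_clamp_sub_le (c d z w : R) : Rabs (clamp c d z - clamp c d w) <= Rabs (z - w).
Proof.
  unfold clamp, Rmax, Rmin.
  repeat destruct Rle_dec; unfold Rabs; repeat destruct Rcase_abs; lra.
Qed.

Lemma continuous_clamp_comp (G : R -> R) (c d : R) :
  c <= d -> continuous_on_cc G c d -> forall z, continuous (fun w => G (clamp c d w)) z.
Proof.
  intros Hcd HG z. apply filterlim_locally. intros eps.
  pose proof (HG (clamp c d z) (clamp_in c d z Hcd)) as Hz.
  apply filterlim_locally with (eps := eps) in Hz.
  destruct Hz as [δ Hδ]. exists δ. intros w Hw.
  apply Hδ; [| apply clamp_in, Hcd].
  change (Rabs (clamp c d w - clamp c d z) < δ).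
  eapply Rle_lt_trans; [apply Rabs_clamp_sub_le | exact Hw].
Qed.

Lemma continuous_on_cc_of_continuous (G : R -> R) (c d : R) :
  (forall z, continuous G z) -> continuous_on_cc G c d.
Proof.
  intros HG z _. apply (filterlim_filter_le_1 _ (filter_le_within _)), HG.
Qed.

Lemma continuous_on_cc_sub (G : R -> R) (a b c d : R) :
  a <= c -> d <= b -> continuous_on_cc G a b -> continuous_on_cc G c d.
Proof.
  intros Hac Hdb HG z Hz P HP.
  generalize (HG z ltac:(lra) P HP). unfold filtermap, within.
  apply filter_imp. intros w Hw Hcd. apply Hw. lra.
Qed.

Lemma continuous_clamp_increment (G φ : R -> R) (c d y t : R) :
  c <= d -> continuous_on_cc G c d -> continuous φ t ->
  continuous (fun t => G (clamp c d (φ t)) - G (clamp c d y)) t.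
Proof.
  intros Hcd HG Hφ.
  apply (continuous_minus (fun t => G (clamp c d (φ t))) (fun _ => G (clamp c d y))).
  - apply (continuous_comp φ (fun z => G (clamp c d z))); [exact Hφ|].
    apply continuous_clamp_comp; assumption.
  - apply continuous_const.
Qed.

Lemma lap_plus_clamp (G : R -> R) (y d s : R) : y <= d ->
  lap_plus G y (d - y) s =
  laplace (fun t => G (clamp y d (y + t)) - G (clamp y d y)) (d - y) s.
Proof.
  intros Hyd. unfold lap_plus, laplace. f_equal. apply RInt_ext. intros t Ht.
  rewrite Rmin_left, Rmax_right in Ht by lra.
  rewrite !clamp_id by lra. reflexivity.
Qed.

Lemma lap_minus_clamp (G : R -> R) (c y s : R) : c <= y ->
  lap_minus G y (y - c) s =
  - laplace (fun t => G (clamp c y (y - t)) - G (clamp c y y)) (y - c) s.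
Proof.
  intros Hcy. unfold lap_minus, laplace. rewrite Ropp_mult_distr_l. f_equal.
  apply RInt_ext. intros t Ht.
  rewrite Rmin_left, Rmax_right in Ht by lra.
  rewrite !clamp_id by lra. reflexivity.
Qed.

Lemma LDup_plus_local (G1 G2 : R -> R) (y d1 d2 η r : R) :
  continuous_on_cc G1 y d1 -> continuous_on_cc G2 y d2 ->
  0 < η -> η <= d1 - y -> η <= d2 - y ->
  (forall t, 0 <= t <= η -> G1 (y + t) - G1 y = G2 (y + t) - G2 y) ->
  Rbar_le (LDup_plus G2 d2 y) (Finite r) -> Rbar_le (LDup_plus G1 d1 y) (Finite r).
Proof.
  intros HG1 HG2 Hη Hd1 Hd2 Hagree. unfold LDup_plus.
  apply limsup_pinfty_le_of_vanishing.
  eapply is_lim_ext.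
  { intros s. symmetry.
    rewrite (lap_plus_clamp G1), (lap_plus_clamp G2) by lra. reflexivity. }
  apply laplace_local with η; try assumption.
  - intros t. apply (continuous_clamp_increment G1 (fun t => y + t)); [lra | exact HG1 |].
    apply (ex_derive_continuous (V := R_NormedModule)). auto_derive. exact I.
  - intros t. apply (continuous_clamp_increment G2 (fun t => y + t)); [lra | exact HG2 |].
    apply (ex_derive_continuous (V := R_NormedModule)). auto_derive. exact I.
  - intros t Ht. rewrite !clamp_id by lra. apply Hagree, Ht.
Qed.

Lemma LDup_minus_local (G1 G2 : R -> R) (y c1 c2 η r : R) :
  continuous_on_cc G1 c1 y -> continuous_on_cc G2 c2 y ->
  0 < η -> η <= y - c1 -> η <= y - c2 ->
  (forall t, 0 <= t <= η -> G1 (y - t) - G1 y = G2 (y - t) - G2 y) ->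
  Rbar_le (LDup_minus G2 c2 y) (Finite r) -> Rbar_le (LDup_minus G1 c1 y) (Finite r).
Proof.
  intros HG1 HG2 Hη Hc1 Hc2 Hagree. unfold LDup_minus.
  apply limsup_pinfty_le_of_vanishing.
  eapply is_lim_ext.
  { intros s. symmetry. rewrite (lap_minus_clamp G1), (lap_minus_clamp G2) by lra.
    unfold Rminus. rewrite Ropp_involutive, Rplus_comm. reflexivity. }
  apply laplace_local with η; try assumption.
  - intros t. apply (continuous_clamp_increment G2 (fun t => y - t)); [lra | exact HG2 |].
    apply (ex_derive_continuous (V := R_NormedModule)). auto_derive. exact I.
  - intros t. apply (continuous_clamp_increment G1 (fun t => y - t)); [lra | exact HG1 |].
    apply (ex_derive_continuous (V := R_NormedModule)). auto_derive. exact I.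
  - intros t Ht. rewrite !clamp_id by lra. symmetry. apply Hagree, Ht.
Qed.

Lemma Rbar_opp_min_opp_le (A B : Rbar) (r : R) :
  Rbar_le (Rbar_opp (Rbar_min (Rbar_opp A) (Rbar_opp B))) (Finite r) <->
  Rbar_le A (Finite r) /\ Rbar_le B (Finite r).
Proof.
  destruct A as [a | |]; destruct B as [b | |]; simpl; unfold Rmin;
    try destruct Rle_dec; simpl; split; intros; try tauto; lra.
Qed.

Lemma LDup_le_iff (F : R -> R) (a b y r : R) : a < b -> a <= y <= b ->
  Rbar_le (LDup F a b y) (Finite r) <->
  (y < b -> Rbar_le (LDup_plus F b y) (Finite r)) /\
  (a < y -> Rbar_le (LDup_minus F a y) (Finite r)).
Proof.
  intros Hab Hy. unfold LDup.
  destruct (Req_EM_T y a) as [-> | Hya].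
  { split; [intros Hp; split; intros; [exact Hp | lra] | tauto]. }
  destruct (Req_EM_T y b) as [-> | Hyb].
  { split; [intros Hm; split; intros; [lra | exact Hm] | tauto]. }
  rewrite Rbar_opp_min_opp_le. split; [tauto|].
  intros [Hp Hm]. split; [apply Hp | apply Hm]; lra.
Qed.

Lemma minor_fun_iff (f V : R -> R) (a b : R) : a < b ->
  minor_fun f V a b <->
  continuous_on_cc V a b /\
  (forall y, a <= y < b -> Rbar_le (LDup_plus V b y) (Finite (f y))) /\
  (forall y, a < y <= b -> Rbar_le (LDup_minus V a y) (Finite (f y))).
Proof.
  intros Hab. unfold minor_fun. split.
  - intros [HV Hder]. split; [exact HV | split].
    + intros y Hy. apply (LDup_le_iff V a b y); [lra | lra | apply Hder; lra | lra].
    + intros y Hy. apply (LDup_le_iff V a b y); [lra | lra | apply Hder; lra | lra].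
  - intros [HV [Hp Hm]]. split; [exact HV|]. intros y Hy.
    assert (Hle : Rbar_le (LDup V a b y) (Finite (f y))).
    { apply LDup_le_iff; [lra | lra|]. split; intros; [apply Hp | apply Hm]; lra. }
    split; [exact Hle|]. destruct (LDup V a b y); [discriminate | contradiction | discriminate].
Qed.

Lemma minor_fun_restrict (f V : R -> R) (a x b : R) : a < x < b ->
  minor_fun f V a b -> minor_fun f V a x.
Proof.
  intros Hx. rewrite !minor_fun_iff by lra. intros [HV [Hp Hm]].
  split; [|split].
  - apply (continuous_on_cc_sub V a b); lra || assumption.
  - intros y Hy. apply (LDup_plus_local V V y x b (x - y)); try lra.
    + apply (continuous_on_cc_sub V a b); lra || assumption.
    + apply (continuous_on_cc_sub V a b); lra || assumption.
    + reflexivity.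
    + apply Hp. lra.
  - intros y Hy. apply Hm. lra.
Qed.

Definition glue (V1 V : R -> R) (a x b z : R) : R :=
  V1 (clamp a x z) + (V (clamp x b z) - V x).

Lemma glue_left (V1 V : R -> R) (a x b z : R) : a <= z <= x -> x <= b ->
  glue V1 V a x b z = V1 z.
Proof. intros. unfold glue. rewrite clamp_id, clamp_left by lra. ring. Qed.

Lemma glue_right (V1 V : R -> R) (a x b z : R) : a <= x -> x <= z <= b ->
  glue V1 V a x b z = V1 x + (V z - V x).
Proof. intros. unfold glue. rewrite clamp_right, clamp_id by lra. reflexivity. Qed.

Lemma continuous_glue (V1 V : R -> R) (a x b : R) : a <= x <= b ->
  continuous_on_cc V1 a x -> continuous_on_cc V a b ->
  forall z, continuous (glue V1 V a x b) z.
Proof.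
  intros Hx HV1 HV z. unfold glue.
  apply (continuous_plus (fun z => V1 (clamp a x z)) (fun z => V (clamp x b z) - V x)).
  - apply continuous_clamp_comp; [lra | exact HV1].
  - apply (continuous_minus (fun z => V (clamp x b z)) (fun _ => V x)).
    + apply continuous_clamp_comp; [lra|].
      apply (continuous_on_cc_sub V a b); lra || assumption.
    + apply continuous_const.
Qed.

Lemma minor_fun_glue (f V1 V : R -> R) (a x b : R) : a < x < b ->
  minor_fun f V1 a x -> minor_fun f V a b -> minor_fun f (glue V1 V a x b) a b.
Proof.
  intros Hx. rewrite !minor_fun_iff by lra. intros [HV1 [Hp1 Hm1]] [HV [Hp Hm]].
  set (W := glue V1 V a x b).
  assert (HW : forall z, continuous W z) by (apply continuous_glue; lra || assumption).
  assert (HWcc : forall c d, continuous_on_cc W c d)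
    by (intros; apply continuous_on_cc_of_continuous, HW).
  split; [apply HWcc | split].
  - intros y Hy. destruct (Rlt_le_dec y x) as [Hyx | Hxy].
    + apply (LDup_plus_local W V1 y b x (x - y)); try lra; try apply HWcc.
      * apply (continuous_on_cc_sub V1 a x); lra || assumption.
      * intros t Ht. unfold W. rewrite !glue_left by lra. reflexivity.
      * apply Hp1. lra.
    + apply (LDup_plus_local W V y b b (b - y)); try lra; try apply HWcc.
      * apply (continuous_on_cc_sub V a b); lra || assumption.
      * intros t Ht. unfold W. rewrite !glue_right by lra. ring.
      * apply Hp. lra.
  - intros y Hy. destruct (Rle_lt_dec y x) as [Hyx | Hxy].
    + apply (LDup_minus_local W V1 y a a (y - a)); try lra; try apply HWcc.
      * apply (continuous_on_cc_sub V1 a x); lra || assumption.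
      * intros t Ht. unfold W. rewrite !glue_left by lra. reflexivity.
      * apply Hm1. lra.
    + apply (LDup_minus_local W V y a a (y - x)); try lra; try apply HWcc.
      * apply (continuous_on_cc_sub V a b); lra || assumption.
      * intros t Ht. unfold W. rewrite !glue_right by lra. ring.
      * apply Hm. lra.
Qed.

Lemma minor_sup_ge (f V : R -> R) (a b : R) :
  minor_fun f V a b -> Rbar_le (Finite (V b - V a)) (minor_sup f a b).
Proof. intros HV. apply Rbar_lub_is_lub. exists V. split; [exact HV | reflexivity]. Qed.

Lemma minor_sup_approx (f : R -> R) (a b I eps : R) :
  minor_sup f a b = Finite I -> 0 < eps ->
  exists V, minor_fun f V a b /\ I - (V b - V a) < eps.
Proof.
  intros Hsup Heps. apply NNPP. intros Hnone.
  assert (Hle : Rbar_le (minor_sup f a b) (Finite (I - eps))).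
  { apply Rbar_lub_is_lub. intros z [V [HV ->]]. simpl.
    apply Rnot_lt_le. intros Hlt. apply Hnone. exists V. split; [exact HV | lra]. }
  rewrite Hsup in Hle. simpl in Hle. lra.
Qed.

Lemma minor_sup_restrict_le (f V : R -> R) (a x b I : R) : a < x < b ->
  minor_sup f a b = Finite I -> minor_fun f V a b ->
  Rbar_le (minor_sup f a x) (Finite (I - (V b - V x))).
Proof.
  intros Hx Hsup HV. apply Rbar_lub_is_lub. intros z [V1 [HV1 ->]].
  pose proof (minor_sup_ge _ _ _ _ (minor_fun_glue f V1 V a x b Hx HV1 HV)) as Hglue.
  rewrite Hsup, (glue_left V1 V a x b a), (glue_right V1 V a x b b) in Hglue by lra.
  simpl in Hglue |- *. lra.
Qed.

Lemma Laplace_int_bounds (f V : R -> R) (a b I x : R) : a < b ->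
  minor_sup f a b = Finite I -> minor_fun f V a b -> a <= x <= b ->
  V x - V a <= Laplace_int f a x <= V x - V a + (I - (V b - V a)).
Proof.
  intros Hab Hsup HV Hx.
  pose proof (minor_sup_ge _ _ _ _ HV) as HVb. rewrite Hsup in HVb. simpl in HVb.
  unfold Laplace_int. destruct (Rle_dec x a) as [Hxa | Hxa].
  { replace x with a by lra. lra. }
  destruct (Req_dec x b) as [-> | Hxb].
  { rewrite Hsup. simpl. lra. }
  pose proof (minor_sup_ge _ _ _ _ (minor_fun_restrict f V a x b ltac:(lra) HV)) as Hlo.
  pose proof (minor_sup_restrict_le f V a x b I ltac:(lra) Hsup HV) as Hup.
  destruct (minor_sup f a x); simpl in *; [lra | contradiction | contradiction].
Qed.

Theorem theorem5p2 (f : R -> R) (a b : R) :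
  Laplace_integrable f a b ->
  continuous_on_cc (fun x => Laplace_int f a x) a b.
Proof.
  intros [Hab [I [Hsup _]]] x0 Hx0.
  apply filterlim_locally. intros eps.
  assert (Heps3 : 0 < eps / 3) by (destruct eps; simpl; lra).
  destruct (minor_sup_approx f a b I (eps / 3) Hsup Heps3) as [V [HV Hgap]].
  pose proof (proj1 HV x0 Hx0) as HVcont.
  apply filterlim_locally with (eps := mkposreal (eps / 3) Heps3) in HVcont.
  unfold filtermap, within in *. revert HVcont. apply filter_imp. simpl.
  intros z HVz Hz. specialize (HVz Hz).
  change (Rabs (V z - V x0) < eps / 3) in HVz.
  change (Rabs (Laplace_int f a z - Laplace_int f a x0) < eps).
  pose proof (Laplace_int_bounds f V a b I z Hab Hsup HV Hz).
  pose proof (Laplace_int_bounds f V a b I x0 Hab Hsup HV Hx0).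
  apply Rabs_lt_between. apply Rabs_lt_between in HVz. lra.
Qed.
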